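(* Let $\mathfrak F=\langle U,B\rangle$ be a 3-frame and $\mathrm{Cm}^{ps}(\mathfrak F)=\langle 2^U,\langle B\rangle,[\![B]\!]\rangle$ its full complex algebra. If $\mathfrak F$ is a betweenness frame (resp. weak betweenness frame, strong betweenness frame), then $\mathrm{Cm}^{ps}(\mathfrak F)$ is a betweenness algebra (resp. weak betweenness algebra, strong betweenness algebra).
   Context: A 3-frame is $\langle U,B\rangle$ with $U\neq\emptyset$, $B\subseteq U^3$. Axioms (for all $a,b,c\in U$): (BT0) $B(a,a,a)$; (BT1) $B(a,b,c)\Rightarrow B(c,b,a)$; (BT2) $B(a,b,c)\Rightarrow B(a,a,b)$; (BT3) $B(a,b,c)\wedge B(a,c,b)\Rightarrow b=c$; (BTW) $B(a,b,a)\Rightarrow a=b$; (BT2s) $B(a,a,b)$. A betweenness frame satisfies (BT0)–(BT3); a weak betweenness frame satisfies (BT0),(BT1),(BT2),(BTW); a strong betweenness frame satisfies (BT0),(BT1),(BT2s),(BT3). Operators on $2^U$: $\langle B\rangle(X,Y)=\{u\mid\exists x\in X\,\exists y\in Y\,B(x,u,y)\}$, $[\![B]\!](X,Y)=\{u\mid\forall x\in X\,\forall y\in Y\,B(x,u,y)\}$. A PS-algebra is $\langle A,f,g\rangle$, $A$ a Boolean algebra with at least two elements, $f,g\colon A^2\to A$, $f$ normal ($f(x,y)=0$ if $x=0$ or $y=0$) and additive in each argument, $g$ co-normal ($g(x,y)=1$ if $x=0$ or $y=0$) and co-additive in each argument ($g(x+x',y)=g(x,y)g(x',y)$, $g(x,y+y')=g(x,y)g(x,y')$).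 Algebraic axioms (for all $x,y,z$): (ABT0) $x\leq f(x,x)$; (ABT1$_f$) $f(x,y)\leq f(y,x)$; (ABT1$_g$) $g(x,y)\leq g(y,x)$; (ABT2) $y\cdot f(x,z)\leq f(x\cdot f(x,y),z)$; (ABT3) $f(x,g(x,-y)\cdot y)\leq y$; (wMIA) $x\neq0,y\neq0\Rightarrow g(x,y)\leq f(x,y)$; (ABTW) $a\neq0\Rightarrow g(a,a)\leq a$; (ABT2$^{\mathrm s}$) $b\neq0\Rightarrow a\leq f(a,b)$. A betweenness algebra satisfies (ABT0),(ABT1$_f$),(ABT1$_g$),(ABT2),(ABT3),(wMIA); a weak betweenness algebra satisfies (ABT0),(ABT1$_f$),(ABT1$_g$),(ABT2),(ABTW); a strong betweenness algebra satisfies (ABT1$_f$),(ABT1$_g$),(ABT3),(wMIA),(ABT2$^{\mathrm s}$). *)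

(* Boolean algebras are rendered as MathComp's complemented distributive
   lattices with top and bottom (ctbDistrLatticeType); the powerset 2^U is
   [set U] (classical_sets), which carries such a canonical structure with
   meet = `&`, join = `|`, complement = ~`, bottom = set0, top = setT. *)
From HB Require Import structures.
From mathcomp Require Import all_boot all_order.
From mathcomp Require Import boolp classical_sets.
Set Implicit Arguments. Unset Strict Implicit. Unset Printing Implicit Defensive.
Import Order.TTheory.
Local Open Scope order_scope.

Section Frames.
Variable U : Type.
Variable B : U -> U -> U -> Prop.

Definition BT0 := forall a, B a a a.
Definition BT1 := forall a b c, B a b c -> B c b a.
Definition BT2 := forall a b c, B a b c -> B a a b.
Definition BT3 := forall a b c, B a b c -> B a c b -> b = c.
Definition BTW := forall a b, B a b a -> a = b.
Definition BT2s := forall a b, B a a b.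

Definition betweenness_frame := [/\ BT0, BT1, BT2 & BT3].
Definition weak_betweenness_frame := [/\ BT0, BT1, BT2 & BTW].
Definition strong_betweenness_frame := [/\ BT0, BT1, BT2s & BT3].

Definition Bdia (X Y : set U) : set U :=
  [set u | exists x, exists y, X x /\ Y y /\ B x u y].
Definition Bbox (X Y : set U) : set U :=
  [set u | forall x y, X x -> Y y -> B x u y].
End Frames.

Section PSAlgebras.
Context {disp : Order.disp_t} {A : ctbDistrLatticeType disp}.
Variables f g : A -> A -> A.

(* notation:  0 = \bot, 1 = \top, x + y = x `|` y, x . y = x `&` y, -x = ~` x *)
Definition PS_algebra : Prop :=
  (\bot : A) != \top /\
  (forall x y, (x == \bot) || (y == \bot) -> f x y = \bot) /\
  (forall x x' y, f (x `|` x') y = f x y `|` f x' y) /\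
  (forall x y y', f x (y `|` y') = f x y `|` f x y') /\
  (forall x y, (x == \bot) || (y == \bot) -> g x y = \top) /\
  (forall x x' y, g (x `|` x') y = g x y `&` g x' y) /\
  (forall x y y', g x (y `|` y') = g x y `&` g x y').

Definition ABT0 := forall x, x <= f x x.
Definition ABT1f := forall x y, f x y <= f y x.
Definition ABT1g := forall x y, g x y <= g y x.
Definition ABT2 := forall x y z, y `&` f x z <= f (x `&` f x y) z.
Definition ABT3 := forall x y, f x (g x (~` y) `&` y) <= y.
Definition wMIA := forall x y, x != \bot -> y != \bot -> g x y <= f x y.
Definition ABTW := forall a, a != \bot -> g a a <= a.
Definition ABT2s := forall a b, b != \bot -> a <= f a b.

Definition betweenness_algebra : Prop :=
  PS_algebra /\ ABT0 /\ ABT1f /\ ABT1g /\ ABT2 /\ ABT3 /\ wMIA.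
Definition weak_betweenness_algebra : Prop :=
  PS_algebra /\ [/\ ABT0, ABT1f, ABT1g, ABT2 & ABTW].
Definition strong_betweenness_algebra : Prop :=
  PS_algebra /\ [/\ ABT1f, ABT1g, ABT3, wMIA & ABT2s].
End PSAlgebras.

From mathcomp Require Import all_boot all_order.
From mathcomp Require Import boolp classical_sets.
Set Implicit Arguments. Unset Strict Implicit. Unset Printing Implicit Defensive.
Local Open Scope classical_set_scope.

Section ComplexAlgebra.
Variables (U : Type) (B : U -> U -> U -> Prop).

Lemma Bdia0l (Y : set U) : Bdia B set0 Y = set0.
Proof. by apply/seteqP; split=> u // [x [y []]]. Qed.

Lemma Bdia0r (X : set U) : Bdia B X set0 = set0.
Proof. by apply/seteqP; split=> u // [x [y [_ []]]]. Qed.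

Lemma BdiaUl (X X' Y : set U) :
  Bdia B (X `|` X') Y = Bdia B X Y `|` Bdia B X' Y.
Proof.
apply/seteqP; split=> u /=.
  by move=> [x [y [[Xx|X'x] [Yy Bxuy]]]]; [left|right]; exists x, y.
by move=> [] [x [y [Xx [Yy Bxuy]]]]; exists x, y; split=> //; [left|right].
Qed.

Lemma BdiaUr (X Y Y' : set U) :
  Bdia B X (Y `|` Y') = Bdia B X Y `|` Bdia B X Y'.
Proof.
apply/seteqP; split=> u /=.
  by move=> [x [y [Xx [[Yy|Y'y] Bxuy]]]]; [left|right]; exists x, y.
by move=> [] [x [y [Xx [Yy Bxuy]]]]; exists x, y; do !split=> //; [left|right].
Qed.

Lemma Bbox0l (Y : set U) : Bbox B set0 Y = setT.
Proof. by apply/seteqP; split=> u // _ x y []. Qed.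

Lemma Bbox0r (X : set U) : Bbox B X set0 = setT.
Proof. by apply/seteqP; split=> u // _ x y _ []. Qed.

Lemma BboxUl (X X' Y : set U) :
  Bbox B (X `|` X') Y = Bbox B X Y `&` Bbox B X' Y.
Proof.
apply/seteqP; split=> u /=.
  by move=> Bu; split=> x y Xx Yy; apply: Bu => //; [left|right].
by move=> [Bu B'u] x y [Xx|X'x] Yy; [apply: Bu|apply: B'u].
Qed.

Lemma BboxUr (X Y Y' : set U) :
  Bbox B X (Y `|` Y') = Bbox B X Y `&` Bbox B X Y'.
Proof.
apply/seteqP; split=> u /=.
  by move=> Bu; split=> x y Xx Yy; apply: Bu => //; [left|right].
by move=> [Bu B'u] x y Xx [Yy|Y'y]; [apply: Bu|apply: B'u].
Qed.

Lemma PS_algebra_Cm : inhabited U -> PS_algebra (Bdia B) (Bbox B).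
Proof.
case=> u0; split; last split; last split; last split; last split; last split.
- by apply/eqP => /seteqP [_ /(_ u0 I)].
- by move=> X Y /orP [] /eqP ->; rewrite ?Bdia0l ?Bdia0r.
- exact: BdiaUl.
- exact: BdiaUr.
- by move=> X Y /orP [] /eqP ->; rewrite ?Bbox0l ?Bbox0r.
- exact: BboxUl.
- exact: BboxUr.
Qed.

Lemma BT0_ABT0 : BT0 B -> ABT0 (Bdia B).
Proof. by move=> Baaa X; apply/subsetPset => u Xu; exists u, u. Qed.

Lemma BT1_ABT1f : BT1 B -> ABT1f (Bdia B).
Proof.
move=> Bsym X Y; apply/subsetPset => u [x [y [Xx [Yy Bxuy]]]].
by exists y, x; do !split=> //; apply: Bsym.
Qed.

Lemma BT1_ABT1g : BT1 B -> ABT1g (Bbox B).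
Proof.
by move=> Bsym X Y; apply/subsetPset => u Bu y x Yy Xx; apply/Bsym/Bu.
Qed.

Lemma BT2_ABT2 : BT2 B -> ABT2 (Bdia B).
Proof.
move=> Bxxy X Y Z; apply/subsetPset => u [Yu [x [z [Xx [Zz Bxuz]]]]].
exists x, z; do !split=> //; exists x, u; do !split=> //.
exact: Bxxy Bxuz.
Qed.

(* If [B x u z] with [x \in X] and [u \in ~Y], then [z \in [[B]](X, ~Y)] forces
   [B x z u], and BT3 gives [u = z \in Y]. *)
Lemma BT3_ABT3 : BT3 B -> ABT3 (Bdia B) (Bbox B).
Proof.
move=> Bantisym X Y; apply/subsetPset => u [x [z [Xx [[BXnYz Yz] Bxuz]]]].
have [//|nYu] := pselect (Y u).
by rewrite (Bantisym _ _ _ Bxuz (BXnYz _ _ Xx nYu)).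
Qed.

Lemma Cm_wMIA : wMIA (Bdia B) (Bbox B).
Proof.
move=> X Y /set0P [x Xx] /set0P [y Yy]; apply/subsetPset => u Bu.
by exists x, y; do !split=> //; apply: Bu.
Qed.

Lemma BTW_ABTW : BTW B -> ABTW (Bbox B).
Proof.
move=> Bxyx X /set0P [x Xx]; apply/subsetPset => u Bu.
by rewrite -(Bxyx _ _ (Bu _ _ Xx Xx)).
Qed.

Lemma BT2s_ABT2s : BT2s B -> ABT2s (Bdia B).
Proof.
move=> Bxxy X Y /set0P [y Yy]; apply/subsetPset => u Xu.
by exists u, y.
Qed.

End ComplexAlgebra.

Theorem theorem28 (U : Type) (B : U -> U -> U -> Prop) (U_nonempty : inhabited U) :
  (betweenness_frame B -> betweenness_algebra (Bdia B) (Bbox B)) /\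
  (weak_betweenness_frame B -> weak_betweenness_algebra (Bdia B) (Bbox B)) /\
  (strong_betweenness_frame B -> strong_betweenness_algebra (Bdia B) (Bbox B)).
Proof.
have PS := PS_algebra_Cm B U_nonempty.
split; [|split].
- case=> h0 h1 h2 h3.
  exact: (conj PS (conj (BT0_ABT0 h0) (conj (BT1_ABT1f h1) (conj (BT1_ABT1g h1)
           (conj (BT2_ABT2 h2) (conj (BT3_ABT3 h3) (Cm_wMIA B))))))).
- case=> h0 h1 h2 hw; split; first exact: PS.
  split; [exact: BT0_ABT0 | exact: BT1_ABT1f | exact: BT1_ABT1g
         | exact: BT2_ABT2 | exact: BTW_ABTW].
- case=> h0 h1 h2s h3; split; first exact: PS.
  split; [exact: BT1_ABT1f | exact: BT1_ABT1g | exact: BT3_ABT3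
         | exact: Cm_wMIA | exact: BT2s_ABT2s].
Qed.
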